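(* Let $\mathcal{A}=(Q,\gamma,W)$ be a one-dimensional pVASS and let $R\neq\emptyset$ be a type II region of $\mathcal{A}$. Then every configuration of $\mathit{pre}^*(R)$ can reach a configuration of $R$ in at most $4|Q|^3$ transitions.
   Context: A one-dimensional pVASS is $\mathcal{A}=(Q,\gamma,W)$ with $Q$ a finite set of control states, rules $\gamma\subseteq Q\times\{-1,0,1\}\times Q$ and weights $W:\gamma\to\mathbb{N}^+$. Configurations are $p(k)\in Q\times\mathbb{N}$. A rule $(p,\kappa,q)$ is enabled in $p(k)$ unless $\kappa=-1$ and $k=0$; a transition $p(k)\to q(k+\kappa)$ exists for each enabled rule, and a configuration with no enabled rule has only a self-loop. $\mathit{post}^*(X)$/$\mathit{pre}^*(X)$ are the sets of configurations reachable from / able to reach $X$. $\mathscr{C}_\mathcal{A}$ is the finite Markov chain on $Q$ with a transition $p\to q$ for each rule $(p,\kappa,q)$ (probability proportional to weight); BSCC = bottom strongly connected component. For $p$ in a BSCC of $\mathscr{C}_\mathcal{A}$, the type II region determined by $p$ is $\mathit{post}^*(p(0))$ if this set is infinite and contained in $\mathit{pre}^*(p(0))$, and $\emptyset$ otherwise. *)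

From mathcomp Require Import all_boot all_order all_algebra.
Set Implicit Arguments. Unset Strict Implicit. Unset Printing Implicit Defensive.

Record pVASS (Q : finType) := PVASS {
  rule : Q -> int -> Q -> bool;
  weight : Q -> int -> Q -> nat;
  rule_dir : forall p k q, rule p k q -> k \in [:: (-1)%R; 0%R; 1%R];
  weight_pos : forall p k q, rule p k q -> (0 < weight p k q)%N
}.

Definition conf (Q : finType) := (Q * nat)%type.

Definition enabled (Q : finType) (A : pVASS Q) (c : conf Q) (k : int) (q : Q) :=
  rule A c.1 k q && ~~ ((k == (-1)%R) && (c.2 == 0%N)).

Definition step (Q : finType) (A : pVASS Q) (c c' : conf Q) : Prop :=
  (exists (k : int) (q : Q), enabled A c k q /\ c'.1 = q /\
      (c'.2%:Z = c.2%:Z + k)%R)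
  \/ ((forall (k : int) (q : Q), ~~ enabled A c k q) /\ c' = c).

Fixpoint steps (Q : finType) (A : pVASS Q) (n : nat) (c c' : conf Q) : Prop :=
  match n with
  | 0 => c = c'
  | n'.+1 => exists c'', step A c c'' /\ steps A n' c'' c'
  end.

Definition reach (Q : finType) (A : pVASS Q) (c c' : conf Q) : Prop :=
  exists n, steps A n c c'.

Definition post_star (Q : finType) (A : pVASS Q) (X : conf Q -> Prop) : conf Q -> Prop :=
  fun c' => exists c, X c /\ reach A c c'.

Definition pre_star (Q : finType) (A : pVASS Q) (X : conf Q -> Prop) : conf Q -> Prop :=
  fun c => exists c', X c' /\ reach A c c'.

Definition infinite_set (Q : finType) (X : conf Q -> Prop) : Prop :=
  ~ (exists s : seq (conf Q), forall c, X c -> c \in s).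

(* The finite Markov chain C_A on Q: an edge p -> q for each rule (p,kappa,q)
   (with probability proportional to the weight; positive weights, so the
   underlying graph is as follows). *)
Definition chain_edge (Q : finType) (A : pVASS Q) : rel Q :=
  fun p q => [exists k : 'I_3, rule A p ((k : nat)%:Z - 1)%R q].

Definition BSCC (Q : finType) (A : pVASS Q) (B : {set Q}) : Prop :=
  B != set0 /\
  (forall p q, p \in B -> q \in B -> connect (chain_edge A) p q) /\
  (forall p q, p \in B -> chain_edge A p q -> q \in B).

Definition in_BSCC (Q : finType) (A : pVASS Q) (p : Q) : Prop :=
  exists B, BSCC A B /\ p \in B.

Definition init (Q : finType) (p : Q) : conf Q -> Prop := fun c => c = (p, 0%N).

Definition typeII_region_of (Q : finType) (A : pVASS Q) (p : Q) (c : conf Q) : Prop :=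
  (infinite_set (post_star A (init p)) /\
   (forall d, post_star A (init p) d -> pre_star A (init p) d)) /\
  post_star A (init p) c.

Definition is_typeII_region (Q : finType) (A : pVASS Q) (R : conf Q -> Prop) : Prop :=
  exists p, in_BSCC A p /\ forall c, R c <-> typeII_region_of A p c.

From mathcomp Require Import all_boot all_order all_algebra.
From mathcomp Require Import zify.
From Stdlib Require Import Classical ClassicalEpsilon.
Set Implicit Arguments. Unset Strict Implicit. Unset Printing Implicit Defensive.

(* Write R = post*(p(0)); every configuration of R returns to p(0). Since R is
   infinite, some run from p(0) climbs to counter |Q|, and two of the last visits
   of the levels 0, ..., |Q| on it share a control state. This yields a period
   0 < P <= |Q| with p(P) in R, and R is then closed under adding multiples of P
   to the counter, and under subtracting them as long as the counter stays at
   least |Q| - 1.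

   Take a shortest run from c into R. If two configurations on it have the same
   control state and counters differing by a multiple of P, cutting out the
   segment between them and shifting the rest of the run by that difference
   gives a shorter run into R. The pigeonhole principle on control states and
   levels modulo P, at |Q|P + 1 successive level crossings, therefore shows that
   the counter never descends by |Q|P along the run and ends at most |Q|P above
   max(c.2, |Q| - 1). So the run visits pairwise distinct configurations whose
   counters lie in a window of width 3|Q|P + |Q|, and its length is at most
   |Q|(3|Q|^2 + |Q|) <= 4|Q|^3. *)

Lemma exists_minimal (P : nat -> Prop) m : P m ->
  exists m0, P m0 /\ forall m', m' < m0 -> ~ P m'.
Proof.
elim/ltn_ind: m => m IH Pm.
case: (classic (exists m', m' < m /\ P m')) => [[m' [lt Pm']]|none].
- exact: IH lt Pm'.
- by exists m; split=> // m' lt Pm'; apply: none; exists m'.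
Qed.

Lemma connect_short (T : finType) (e : rel T) x y : connect e x y ->
  exists s, [/\ path e x s, last x s = y & size s < #|T|].
Proof.
move/connectP => [s0 Hp ->]; case: (shortenP Hp) => s Hs Hu _.
exists s; split=> //; have := max_card (mem (x :: s)).
by rewrite (card_uniqP Hu).
Qed.

Section Crossing.
Variables (v : nat -> nat) (m : nat).

Lemma last_crossing_up i0 l : (forall j, j < m -> v j.+1 <= (v j).+1) ->
  i0 <= m -> v i0 <= l <= v m ->
  exists i, [/\ i0 <= i <= m, v i = l & forall j, i < j <= m -> l < v j].
Proof.
move=> up i0m /andP [vi0 vm].
have ex : exists i, (i0 <= i <= m) && (v i <= l) by exists i0; rewrite leqnn i0m vi0.
have ub i : (i0 <= i <= m) && (v i <= l) -> i <= m by case/andP => /andP [].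
case: (ex_maxnP ex ub) => i /andP [/andP [i0i im] vil] imax.
have after j : i < j <= m -> l < v j.
  move=> /andP [ij jm]; rewrite ltnNge; apply/negP => vjl.
  by have := imax j; rewrite jm vjl (leq_trans i0i (ltnW ij)) /= => /(_ isT); lia.
exists i; split=> //; first by rewrite i0i.
case: (ltnP i m) => [lt|ge].
- by have := after i.+1; rewrite ltnSn lt => /(_ isT); have := up i lt; lia.
- have E : i = m by lia.
  by subst i; lia.
Qed.

Lemma first_crossing_down i0 i1 l : (forall j, j < m -> v j <= (v j.+1).+1) ->
  i0 <= i1 -> i1 <= m -> v i1 <= l <= v i0 ->
  exists i, [/\ i0 <= i <= i1, v i = l & forall j, i0 <= j < i -> l < v j].
Proof.
move=> down i01 i1m /andP [vi1 vi0].
have ex : exists i, (i0 <= i) && (v i <= l) by exists i1; rewrite i01 vi1.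
case: (ex_minnP ex) => i /andP [i0i vil] imin.
have before j : i0 <= j < i -> l < v j.
  move=> /andP [i0j ji]; rewrite ltnNge; apply/negP => vjl.
  by have := imin j; rewrite i0j vjl => /(_ isT); lia.
have ii1 : i <= i1 by apply: imin; rewrite i01 vi1.
exists i; split=> //; first by rewrite i0i.
case: (ltnP i0 i) => [lt|ge]; last first.
  have E : i0 = i by lia.
  by subst i0; lia.
case: i i0i imin lt vil before ii1 => // i _ _ lt vil before ii1.
have := down i (leq_trans ii1 i1m); have := before i; rewrite ltnSn -ltnS lt.
by move=> /(_ isT); lia.
Qed.

End Crossing.

Lemma pigeonhole_mod (Q : finType) (T : Type) (h : T -> Q) (R : nat -> T -> Prop) P :
  0 < P -> (forall t, t <= #|Q| * P -> exists x, R t x) ->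
  exists a b x y, [/\ a < b <= #|Q| * P, R a x, R b y, h x = h y & P %| b - a].
Proof.
move=> P_gt0 HR; have [x0 _] := HR 0 (leq0n _).
have [g Hg] : exists g : nat -> T, forall t, t <= #|Q| * P -> R t (g t).
  apply: (choice (fun t x => t <= #|Q| * P -> R t x)) => t.
  case: (leqP t (#|Q| * P)) => [/HR [x Hx]|lt]; first by exists x.
  by exists x0.
pose F (t : 'I_(#|Q| * P).+1) := (h (g t), Ordinal (ltn_pmod t P_gt0)).
have : ~~ injectiveb F.
  apply/negP => /injectiveP Finj; have := leq_card F Finj.
  by rewrite card_prod !card_ord ltnn.
move/injectivePn => [x [y xy]]; case=> /eqP hxy /eqP mxy.
wlog lt : x y xy hxy mxy / x < y.
  move=> gen; case: (ltngtP x y) => [lt|lt|E]; first exact: gen xy hxy mxy lt.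
  - by apply: (gen y x _ _ _ lt); rewrite eq_sym.
  - by case/eqP: xy; apply: val_inj.
exists x, y, (g x), (g y); split.
- by rewrite lt -ltnS ltn_ord.
- by apply: Hg; rewrite -ltnS (ltn_trans lt).
- by apply: Hg; rewrite -ltnS.
- exact/eqP.
- by rewrite -eqn_mod_dvd ?(ltnW lt) // eq_sym.
Qed.

Lemma window_card (Q : finType) (f : nat -> Q * nat) m lo W :
  (forall j j', j < j' <= m -> f j <> f j') ->
  (forall j, j <= m -> lo <= (f j).2 < lo + W) -> m < #|Q| * W.
Proof.
move=> uniq win.
have off (j : 'I_m.+1) : (f j).2 - lo < W by have := win j (ltn_ord j); lia.
pose F (j : 'I_m.+1) : Q * 'I_W := ((f j).1, Ordinal (off j)).
have F_inj : injective F.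
  move=> x y [E1 E2].
  have E : f x = f y.
    rewrite [f x]surjective_pairing [f y]surjective_pairing E1; congr pair.
    by have := win x (ltn_ord x); have := win y (ltn_ord y); move: E2; lia.
  apply: val_inj; case: (ltngtP x y) => // lt; exfalso.
  - by apply: (uniq x y) => //; rewrite lt -ltnS ltn_ord.
  - by apply: (uniq y x) => //; rewrite lt -ltnS ltn_ord.
by have := leq_card F F_inj; rewrite card_prod !card_ord.
Qed.

Lemma infinite_unbounded (Q : finType) (X : conf Q -> Prop) : infinite_set X ->
  forall N, exists c, X c /\ N <= c.2.
Proof.
move=> Xinf N; apply: NNPP => bounded; apply: Xinf.
exists [seq (x, y) | x <- enum Q, y <- iota 0 N] => [[x y] Xc].
apply: allpairs_f; first by rewrite mem_enum.
rewrite mem_iota /= add0n ltnNge; apply/negP => Ny.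
by apply: bounded; exists (x, y).
Qed.

Section Moves.
Variables (Q : finType) (A : pVASS Q).

(* A transition, or a stutter. Unlike [step], stutters are allowed everywhere,
   which makes runs stable under shifting the counter. *)
Definition move (c d : conf Q) : Prop :=
  (exists (k : int) (q : Q), enabled A c k q /\ d.1 = q /\ (d.2%:Z = c.2%:Z + k)%R)
  \/ d = c.

Definition run (f : nat -> conf Q) (m : nat) := forall i, i < m -> move (f i) (f i.+1).

Definition shift (j : nat) (c : conf Q) : conf Q := (c.1, c.2 + j).
Definition unshift (j : nat) (c : conf Q) : conf Q := (c.1, c.2 - j).

Lemma rule_dirP p k q : rule A p k q -> [\/ k = (-1)%R, k = 0%R | k = 1%R].
Proof.
move/rule_dir; rewrite !inE => /or3P [/eqP->|/eqP->|/eqP->].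
- exact: Or31.
- exact: Or32.
- exact: Or33.
Qed.

Lemma move_counter c d : move c d -> d.2 <= c.2.+1 /\ c.2 <= d.2.+1.
Proof.
case=> [[k [q [/andP [Hr _] [_ Hd]]]]|->]; last by split.
by case: (rule_dirP Hr) => Hk; subst k; split; lia.
Qed.

Lemma move_shift j c d : move c d -> move (shift j c) (shift j d).
Proof.
case=> [[k [q [/andP [Hr Hn] [Hq Hd]]]]|->]; last by right.
left; exists k, q; split; last by split=> //=; lia.
apply/andP; split=> //=; apply: contra Hn => /andP [-> /eqP H].
apply/eqP; lia.
Qed.

Lemma move_unshift j c d : j <= c.2 -> j <= d.2 -> move c d ->
  move (unshift j c) (unshift j d).
Proof.
move=> jc jd; case=> [[k [q [/andP [Hr Hn] [Hq Hd]]]]|->]; last by right.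
left; exists k, q; split; last by split=> //=; lia.
apply/andP; split=> //=; apply/negP => /andP [/eqP Hk /eqP H].
subst k; lia.
Qed.

Lemma step_move c d : step A c d -> move c d.
Proof. by case=> [H|[_ ->]]; [left | right]. Qed.

Lemma reach_refl c : reach A c c.
Proof. by exists 0. Qed.

Lemma steps_trans n1 n2 c d e :
  steps A n1 c d -> steps A n2 d e -> steps A (n1 + n2) c e.
Proof.
elim: n1 c => [|n1 IH] c /=; first by move=> ->.
by move=> [c' [Hc H1]] H2; exists c'; split; last exact: IH H1 H2.
Qed.

Lemma reach_trans c d e : reach A c d -> reach A d e -> reach A c e.
Proof. by move=> [n1 H1] [n2 H2]; exists (n1 + n2); exact: steps_trans H1 H2. Qed.

Lemma move_reach c d : move c d -> reach A c d.
Proof.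
case=> [H|->]; last exact: reach_refl.
by exists 1, d; split=> //; left.
Qed.

Lemma run_steps f m : run f m -> exists n, n <= m /\ steps A n (f 0) (f m).
Proof.
elim: m f => [|m IH] f Hf; first by exists 0.
have [n [le_nm Hn]] := IH (fun i => f i.+1) (fun i Hi => Hf i.+1 Hi).
case: (Hf 0 isT) => [Hs|E].
- by exists n.+1; split=> //; exists (f 1); split=> //; left.
- by exists n; split; [exact: leqW | rewrite -E].
Qed.

Lemma run_reach f m i i' : run f m -> i <= i' <= m -> reach A (f i) (f i').
Proof.
move=> Hf /andP [ii' i'm].
have Hg : run (fun k => f (i + k)) (i' - i).
  by move=> k Hk; rewrite addnS; apply: Hf; lia.
have [n [_ Hn]] := run_steps Hg.
by exists n; rewrite addn0 subnKC in Hn.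
Qed.

Lemma reach_run c d : reach A c d -> exists f m, [/\ f 0 = c, f m = d & run f m].
Proof.
move=> [n]; elim: n c => [|n IH] c /=; first by move=> ->; exists (fun=> d), 0.
move=> [c' [Hc /IH [f [m [f0 fm Hf]]]]].
exists (fun i => if i is i'.+1 then f i' else c), m.+1; split=> //.
by move=> [|i] Hi /=; [rewrite f0; exact: step_move | exact: Hf].
Qed.

Lemma reach_shift j c d : reach A c d -> reach A (shift j c) (shift j d).
Proof.
move=> [n]; elim: n c => [|n IH] c /=; first by move=> ->; exact: reach_refl.
move=> [c' [/step_move Hc /IH Hd]].
exact: reach_trans (move_reach (move_shift j Hc)) Hd.
Qed.

Lemma chain_edgeP p q : chain_edge A p q <-> exists k, rule A p k q.
Proof.
split; first by move/existsP => [k Hk]; eexists; exact: Hk.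
move=> [k Hr]; apply/existsP.
by case: (rule_dirP Hr) => Hk; subst k;
  [exists (@Ordinal 3 0 isT) | exists (@Ordinal 3 1 isT) | exists (@Ordinal 3 2 isT)].
Qed.

Lemma reach_connect c d : reach A c d -> connect (chain_edge A) c.1 d.1.
Proof.
move=> [n]; elim: n c => [|n IH] c /=; first by move=> ->.
move=> [c' [/step_move Hc /IH]]; apply: connect_trans.
case: Hc => [[k [q [/andP [Hr _] [-> _]]]]|->]; last exact: connect0.
by apply: connect1; apply/chain_edgeP; exists k.
Qed.

(* The bound [k <= c + size s] is the invariant that keeps every decrement
   along the path enabled. *)
Lemma path_reach q s k : path (chain_edge A) q s -> size s <= k ->
  exists c, k <= c + size s /\ reach A (q, c) (last q s, k).
Proof.
elim: s q => [|y s IH] q /=; first by move=> _ _; exists k; split; [lia | exact: reach_refl].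
move=> /andP [/chain_edgeP [kk Hr] Hp] Hk.
have [c [Hc Hy]] := IH y Hp (ltnW Hk).
have Hq c' : (c%:Z = c'%:Z + kk)%R -> reach A (q, c') (last y s, k).
  move=> E; apply: reach_trans Hy; apply: move_reach; left; exists kk, y.
  split=> //; rewrite /enabled /= Hr /=; apply/negP => /andP [/eqP Ek /eqP Ec].
  by subst; lia.
by case: (rule_dirP Hr) => Ekk; subst kk;
  [exists c.+1 | exists c | exists c.-1]; split; try lia; apply: Hq; lia.
Qed.

End Moves.

Section Region.
Variables (Q : finType) (A : pVASS Q) (p : Q).
Local Notation InR c := (reach A (p, 0) c).
Hypothesis returns : forall c, InR c -> reach A c (p, 0).

Lemma reach_return_mul b j : reach A (p, b) (p, 0) -> reach A (p, j.+1 * b) (p, b).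
Proof.
move=> Hb; elim: j => [|j IH]; first by rewrite mul1n; exact: reach_refl.
apply: reach_trans IH; rewrite mulSn.
by have := reach_shift (j.+1 * b) Hb; rewrite /shift /= add0n.
Qed.

Lemma region_multiple e j : InR (p, e) -> InR (p, j * e).
Proof.
move=> He; elim: j => [|j IH]; first exact: reach_refl.
apply: reach_trans IH _; rewrite mulSn.
by have := reach_shift (j * e) He; rewrite /shift /= add0n.
Qed.

Lemma region_of_return e b : InR (p, e) -> 0 < e -> reach A (p, b) (p, 0) -> InR (p, b).
Proof.
case: e => // e He _ Hb; apply: reach_trans (region_multiple b He) _.
by rewrite mulnC; exact: reach_return_mul.
Qed.

Lemma small_period q K : InR (q, K) -> #|Q| <= K -> exists P, 0 < P <= #|Q| /\ InR (p, P).
Proof.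
move=> /reach_run [f [M [f0 fM frun]]] HK.
have levels t : t <= #|Q| * 1 ->
    exists i, [/\ 0 <= i <= M, (f i).2 = t & forall j, i < j <= M -> t < (f j).2].
  move=> Ht; apply: (last_crossing_up (v := fun i => (f i).2)) => //.
  - by move=> j Hj; have [] := move_counter (frun j Hj).
  - by rewrite f0 fM /=; lia.
have [a [b [i [i' [/andP [ab bn] [/andP [_ iM] fi _] [/andP [_ i'M] fi' afti'] si _]]]]]
  := pigeonhole_mod (fun i => (f i).1) (ltn0Sn 0) levels.
have ii' : i < i'.
  case: (ltngtP i i') => // [i'i|E]; last by move: fi'; rewrite -E fi; lia.
  by have := afti' i; rewrite i'i iM => /(_ isT); lia.
have Ri : InR (f i) by rewrite -f0; apply: (run_reach frun); rewrite leq0n.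
have Ri' : InR (f i') by rewrite -f0; apply: (run_reach frun); rewrite leq0n.
exists (b - a); split; first by rewrite muln1 in bn; lia.
apply: reach_trans Ri' _.
have := reach_shift (b - a) (returns Ri).
by rewrite /shift /= fi add0n subnKC ?(ltnW ab) // si -fi' -surjective_pairing.
Qed.

Section Period.
Variable P : nat.
Hypothesis P_gt0 : 0 < P.
Hypothesis pP : InR (p, P).

Lemma region_shift s k d : InR (s, k) -> P %| d -> InR (s, k + d).
Proof.
move=> Hs /dvdnP [j ->]; apply: reach_trans (region_multiple j pP) _.
by have := reach_shift (j * P) Hs; rewrite /shift /= add0n.
Qed.

(* s is reachable from p within |Q| - 1 steps of the chain. Walking that path
   from some p(c) to s(k - P) and shifting it up by P, p(c + P) returns to p(0)
   through s(k), so p(c + P) lies in the region, and p(c) is reached from it. *)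
Lemma region_unshift_period s k : InR (s, k) -> P + (#|Q| - 1) <= k -> InR (s, k - P).
Proof.
move=> Hs Hk.
have [sq [psq lsq sq_small]] := connect_short (reach_connect Hs).
have [|c [_ Hc]] := path_reach psq (_ : size sq <= k - P); first by lia.
rewrite lsq in Hc.
have HcP : reach A (p, c + P) (s, k).
  by have := reach_shift P Hc; rewrite /shift /= subnK //; lia.
have RcP := region_of_return pP P_gt0 (reach_trans HcP (returns Hs)).
apply: reach_trans (reach_trans RcP _) Hc.
by have := reach_shift c (returns pP); rewrite /shift /= add0n addnC.
Qed.

Lemma region_unshift s k d : InR (s, k) -> P %| d -> d + (#|Q| - 1) <= k -> InR (s, k - d).
Proof.
move=> Hs /dvdnP [j ->]; elim: j k Hs => [|j IH] k Hs Hk; first by rewrite subn0.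
rewrite mulSn in Hk *; rewrite subnDA; apply: IH; last by lia.
by apply: region_unshift_period Hs _; lia.
Qed.

Definition region_run c m := exists f, [/\ f 0 = c, run A f m & InR (f m)].

Lemma run_excise f m i i' (phi : conf Q -> conf Q) : run A f m -> i < i' <= m ->
  phi (f i') = f i -> (forall j, i' <= j < m -> move A (phi (f j)) (phi (f j.+1))) ->
  InR (phi (f m)) -> region_run (f 0) (m - (i' - i)).
Proof.
move=> Hf /andP [ii' i'm] phi_i' Hphi Rm.
pose g j := if j <= i then f j else phi (f (j + (i' - i))).
have gE j : i <= j -> g j = phi (f (j + (i' - i))).
  rewrite /g leq_eqVlt => /orP [/eqP <-|lt]; last by rewrite leqNgt lt.
  by rewrite leqnn subnKC ?phi_i' // ltnW.
exists g; split.
- by rewrite /g leq0n.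
- move=> j Hj; case: (ltnP j i) => [lt|ge].
    by rewrite /g lt (ltnW lt); apply: Hf; lia.
  by rewrite !gE ?(leqW ge) // addSn; apply: Hphi; lia.
- by rewrite gE ?subnK //; lia.
Qed.

Lemma excise_descent f m i i' d : run A f m -> InR (f m) -> i < i' <= m ->
  (f i).1 = (f i').1 -> (f i).2 = (f i').2 + d -> P %| d ->
  region_run (f 0) (m - (i' - i)).
Proof.
move=> Hf Rm ii' E1 E2 Pd; apply: (run_excise (phi := shift d)) => //.
- by rewrite /shift -E2 -E1 -surjective_pairing.
- by move=> j /andP [_ Hj]; apply: move_shift; apply: Hf.
- by rewrite [f m]surjective_pairing in Rm; exact: region_shift Rm Pd.
Qed.

Lemma excise_ascent f m i i' d : run A f m -> InR (f m) -> i < i' <= m ->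
  (f i).1 = (f i').1 -> (f i').2 = (f i).2 + d -> P %| d ->
  (forall j, i' <= j <= m -> d <= (f j).2) -> d + (#|Q| - 1) <= (f m).2 ->
  region_run (f 0) (m - (i' - i)).
Proof.
move=> Hf Rm ii' E1 E2 Pd Hd Hm; apply: (run_excise (phi := unshift d)) => //.
- by rewrite /unshift E2 addnK -E1 -surjective_pairing.
- move=> j /andP [i'j jm]; apply: move_unshift; try apply: Hd; try apply: Hf; lia.
- by rewrite [f m]surjective_pairing in Rm; exact: region_unshift Rm Pd Hm.
Qed.

Section ShortestRun.
Variables (f : nat -> conf Q) (m : nat).
Hypotheses (f_run : run A f m) (f_end : InR (f m)).
Hypothesis f_min : forall m', m' < m -> ~ region_run (f 0) m'.

Lemma shortest_run_counter j : j < m -> (f j.+1).2 <= (f j).2.+1 /\ (f j).2 <= (f j.+1).2.+1.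
Proof. by move=> Hj; apply: move_counter; apply: f_run. Qed.

Lemma shortest_run_uniq j j' : j < j' <= m -> f j <> f j'.
Proof.
move=> jj' E; apply: (f_min (m' := m - (j' - j))); first lia.
by apply: (excise_descent (d := 0)) => //; rewrite ?E ?addn0 ?dvdn0.
Qed.

Lemma shortest_run_no_descent j0 j1 : j0 <= j1 -> j1 <= m -> (f j0).2 < (f j1).2 + #|Q| * P.
Proof.
move=> j01 j1m; rewrite ltnNge; apply/negP => descent.
have levels t : t <= #|Q| * P -> exists i, [/\ j0 <= i <= j1, (f i).2 = (f j0).2 - t
    & forall j, j0 <= j < i -> (f j0).2 - t < (f j).2].
  move=> Ht; apply: (first_crossing_down (v := fun i => (f i).2) (m := m)) => //.
  - by move=> j Hj; have [] := shortest_run_counter Hj.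
  - by apply/andP; split; lia.
have [a [b [i [i' [/andP [ab bN] [/andP [j0i ij1] fi befi] [/andP [j0i' i'j1] fi' _] si Pd]]]]]
  := pigeonhole_mod (fun i => (f i).1) P_gt0 levels.
have ii' : i < i'.
  case: (ltngtP i i') => // [i'i|E]; last by move: fi'; rewrite -E fi; lia.
  by have := befi i'; rewrite j0i' i'i => /(_ isT); lia.
apply: (f_min (m' := m - (i' - i))); first lia.
by apply: (excise_descent (d := b - a)) => //; [rewrite ii'; lia | lia].
Qed.

Lemma shortest_run_end_bound : (f m).2 <= maxn (f 0).2 (#|Q| - 1) + #|Q| * P.
Proof.
set L := maxn _ _; rewrite leqNgt; apply/negP => high.
have levels t : t <= #|Q| * P -> exists i, [/\ 0 <= i <= m, (f i).2 = L + t
    & forall j, i < j <= m -> L + t < (f j).2].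
  move=> Ht; apply: (last_crossing_up (v := fun i => (f i).2)) => //.
  - by move=> j Hj; have [] := shortest_run_counter Hj.
  - by apply/andP; split; rewrite /L; lia.
have [a [b [i [i' [/andP [ab bN] [/andP [_ im] fi afti] [/andP [_ i'm] fi' afti'] si Pd]]]]]
  := pigeonhole_mod (fun i => (f i).1) P_gt0 levels.
have ii' : i < i'.
  case: (ltngtP i i') => // [i'i|E]; last by move: fi'; rewrite -E fi; lia.
  by have := afti' i; rewrite i'i im => /(_ isT); lia.
apply: (f_min (m' := m - (i' - i))); first lia.
apply: (excise_ascent (d := b - a)) => //; first by rewrite ii'.
- by lia.
- move=> j /andP [i'j jm]; case: (ltnP i' j) => [lt|ge].
    by have := afti' j; rewrite lt jm => /(_ isT); lia.
  have E : j = i' by lia.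
  by subst j; lia.
- by rewrite /L in high *; lia.
Qed.

Lemma shortest_run_length : P <= #|Q| -> m <= 4 * #|Q| ^ 3.
Proof.
move=> P_le.
have window j : j <= m -> (f 0).2.+1 - #|Q| * P <= (f j).2 <
    (f 0).2.+1 - #|Q| * P + (3 * (#|Q| * P) + #|Q|).
  move=> jm; have := shortest_run_no_descent (leq0n j) jm.
  have := shortest_run_no_descent jm (leqnn m); have := shortest_run_end_bound.
  lia.
have := window_card shortest_run_uniq window.
have : #|Q| * (3 * (#|Q| * P) + #|Q|) <= 4 * #|Q| ^ 3.
  by rewrite !expnS expn0 muln1; nia.
lia.
Qed.

End ShortestRun.

End Period.
End Region.

Theorem mainTheorem6 (Q : finType) (A : pVASS Q) (R : conf Q -> Prop) :
  is_typeII_region A R -> (exists c, R c) ->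
  forall c, pre_star A R c ->
  exists (n : nat) (c' : conf Q), (n <= 4 * #|Q| ^ 3)%N /\ steps A n c c' /\ R c'.
Proof.
move=> [p [_ R_iff]] [c0 /R_iff [[post_inf post_returns] _]] c [c' [Rc' cc']].
have R_post d : R d <-> reach A (p, 0) d.
  split=> [/R_iff [_ [x [-> //]]] | Hd].
  by apply/R_iff; split=> //; exists (p, 0).
have returns d : reach A (p, 0) d -> reach A d (p, 0).
  by move=> Hd; have [x [-> //]] := post_returns d (ex_intro _ (p, 0) (conj erefl Hd)).
have [[q K] [[x [-> HqK]] HK]] := infinite_unbounded post_inf #|Q|.
have [P [/andP [P_gt0 P_le] pP]] := small_period returns HqK HK.
have [f [m [f0 fm frun]]] := reach_run cc'.
have c_run : region_run A p c m by exists f; split=> //; rewrite fm; apply/R_post.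
have [m0 [[g [g0 grun gend]] gmin]] := exists_minimal c_run.
rewrite -g0 in gmin.
have m0_le := shortest_run_length returns P_gt0 pP grun gend gmin P_le.
have [n [n_le Hn]] := run_steps grun.
exists n, (g m0); split; first exact: leq_trans n_le m0_le.
by rewrite -g0; split=> //; apply/R_post.
Qed.
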